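(* Let $T$ be a rooted tree with root $v$, with $n$ vertices and $l$ leaves, where the root is not counted as a leaf. Then $\alpha(T,v)\ge n-l-1+2^l$.
   Context: All trees are finite. Here a leaf is a non-root vertex of degree 1 (the root is never counted as a leaf, even if it has degree 1). A subtree is a nonempty vertex set inducing a connected subgraph, and $\alpha(T,v)$ is the number of subtrees of $T$ containing $v$. *)

From mathcomp Require Import all_boot.
Set Implicit Arguments. Unset Strict Implicit. Unset Printing Implicit Defensive.

Section Trees.
Variable T : finType.
Variable e : rel T.

Definition simple_graph : Prop := symmetric e /\ irreflexive e.

Definition connected_graph : Prop := forall x y : T, connect e x y.

(* a cycle: distinct vertices x :: p, at least 3 of them, consecutive ones
   adjacent and the last one adjacent to x *)
Definition has_cycle : Prop :=
  exists (x : T) (p : seq T),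
    [/\ 2 <= size p, uniq (x :: p), path e x p & e (last x p) x].

Definition is_tree : Prop := [/\ simple_graph, connected_graph & ~ has_cycle].

Definition degree (x : T) : nat := #|[set y | e x y]|.

Definition leaves (r : T) : {set T} := [set x | (x != r) && (degree x == 1)].

Definition induced (S : {set T}) : rel T :=
  fun a b => [&& e a b, a \in S & b \in S].

Definition is_subtree (S : {set T}) : bool :=
  (S != set0) && [forall x in S, forall y in S, connect (induced S) x y].

Definition alpha (v : T) : nat := #|[set S : {set T} | (v \in S) && is_subtree S]|.

End Trees.

(* Two families of subtrees containing the root v are disjoint and have
   2^l + (n - l - 1) members.  Deleting any set M of leaves leaves a
   connected graph, since no path between surviving vertices passes through
   a vertex of degree 1: this gives 2^l subtrees.  For each of the n - l - 1
   vertices u that are neither the root nor a leaf, the component of v in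
   T - u is a subtree; it misses u, so it is none of the previous ones, and
   distinct u give distinct components because on a path from v to u the
   first of u, w that is met lies in the component avoiding the other one. *)

From mathcomp Require Import all_boot.
From mathcomp Require Import zify.
Set Implicit Arguments.
Unset Strict Implicit.

Section ConnectedGraph.
Variables (T : finType) (e : rel T).
Hypothesis e_sym : symmetric e.

Lemma degree_gt1 (y a b : T) : e y a -> e y b -> a != b -> 1 < degree e y.
Proof.
move=> eya eyb neqab; rewrite /degree.
have: [set a; b] \subset [set z | e y z].
  by apply/subsetP=> z; rewrite !inE => /orP[]/eqP->.
by move/subset_leq_card; rewrite cards2 neqab.
Qed.

(* An inner vertex of a duplicate-free path has two distinct neighbours. *)
Lemma path_induced_degree_le1 (S : {set T}) :
    (forall y, y \notin S -> degree e y <= 1) ->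
  forall p x, path e x p -> uniq (x :: p) -> x \in S -> last x p \in S ->
  path (induced e S) x p.
Proof.
move=> degS; elim=> [|y p IHp] x //=.
case/andP=> exy pth /andP[]; rewrite inE negb_or => /andP[nxy nxp] up xS lS.
have yS : y \in S.
  case: p => [|z p] in IHp pth up lS nxp *; first by [].
  case/andP: pth => eyz _.
  apply/negPn/negP => /degS.
  have nxz : x != z by move: nxp; rewrite inE negb_or => /andP[].
  by rewrite leqNgt (@degree_gt1 y x z) // e_sym.
by rewrite /induced exy xS yS /= IHp.
Qed.

Hypothesis e_connected : connected_graph e.

Lemma is_subtree_degree_le1 (S : {set T}) :
  S != set0 -> (forall y, y \notin S -> degree e y <= 1) -> is_subtree e S.
Proof.
move=> S_n0 degS; rewrite /is_subtree S_n0 /=.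
apply/forall_inP=> x xS; apply/forall_inP=> y yS.
case/connectP: (e_connected x y) => p pth ->{y} in yS *.
case: (shortenP pth) yS => p' pth' up' _ yS.
by apply/connectP; exists p' => //; apply: path_induced_degree_le1.
Qed.

Lemma is_subtree_setC_leaves (r : T) (M : {set T}) :
  M \subset leaves e r -> (r \in ~: M) && is_subtree e (~: M).
Proof.
move=> /subsetP ML.
have rM : r \in ~: M by rewrite inE; apply/negP => /ML; rewrite inE eqxx.
rewrite rM is_subtree_degree_le1 //; first by apply/set0Pn; exists r.
by move=> y; rewrite inE negbK => /ML; rewrite inE => /andP[_ /eqP->].
Qed.

(* Contains v even when v is outside A. *)
Definition component (A : {set T}) (v : T) : {set T} :=
  [set x | connect (induced e A) v x].

Lemma component_root (A : {set T}) (v : T) : v \in component A v.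
Proof. by rewrite inE connect0. Qed.

Lemma component_step (A : {set T}) (v x y : T) :
  x \in component A v -> e x y -> x \in A -> y \in A -> y \in component A v.
Proof.
rewrite !inE => vx exy xA yA.
by apply: (connect_trans vx); apply: connect1; rewrite /induced exy xA yA.
Qed.

Lemma component_notin (A : {set T}) (v u : T) :
  u != v -> u \notin A -> u \notin component A v.
Proof.
move=> nuv uA; apply/negP; rewrite inE => /connectP [p pth equ].
case/lastP: p => [|q z] /= in pth equ; first by rewrite equ eqxx in nuv.
rewrite last_rcons in equ; subst z.
by move: pth; rewrite rcons_path => /andP[_ /and3P[_ _ uA']]; rewrite uA' in uA.
Qed.

Lemma is_subtree_component (A : {set T}) (v : T) : is_subtree e (component A v).
Proof.
set C := component A v.
have vC : v \in C := component_root A v.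
have symC : symmetric (induced e C).
  by move=> a b; rewrite /induced e_sym; case: (a \in C); case: (b \in C).
have pathC p a : a \in C -> path (induced e A) a p -> path (induced e C) a p.
  elim: p a => [|b p IHp] a //= aC /andP[/and3P[eab aA bA] pth].
  have bC : b \in C by apply: (component_step aC).
  by rewrite /induced eab aC bC /= IHp.
have connC x : x \in C -> connect (induced e C) v x.
  rewrite inE => /connectP[p pth ->].
  by apply/connectP; exists p => //; apply: pathC.
apply/andP; split; first by apply/set0Pn; exists v.
apply/forall_inP=> x xC; apply/forall_inP=> y yC.
by apply: (connect_trans _ (connC y yC)); rewrite (sym_connect_sym symC) connC.
Qed.

Lemma component_setC1_path (v u w : T) : u != w ->
  forall p x, x \in component [set~ u] v -> x \in component [set~ w] v ->
  x != u -> x != w -> path e x p -> last x p = u ->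
  (w \in component [set~ u] v) || (u \in component [set~ w] v).
Proof.
move=> nuw; elim=> [|y p IHp] x xu xw nxu nxw /=.
  by move=> _ exu; rewrite exu eqxx in nxu.
case/andP=> exy pth lst.
have [yu|nyu] := eqVneq y u.
  by subst y; apply/orP; right; apply: (component_step xw exy); rewrite !inE // eq_sym.
have [yw|nyw] := eqVneq y w.
  by subst y; apply/orP; left; apply: (component_step xu exy); rewrite !inE // eq_sym.
apply: (IHp y) => //.
  by apply: (component_step xu exy); rewrite !inE.
by apply: (component_step xw exy); rewrite !inE.
Qed.

Lemma component_setC1_inj (v u w : T) : u != v -> w != v ->
  component [set~ u] v = component [set~ w] v -> u = w.
Proof.
move=> nuv nwv Cuw; apply/eqP/negPn/negP => nuw.
have uC : u \notin component [set~ u] v.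
  by apply: component_notin; rewrite ?inE ?eqxx.
have wC : w \notin component [set~ w] v.
  by apply: component_notin; rewrite ?inE ?eqxx.
case/connectP: (e_connected v u) => p pth equ.
have nvu : v != u by rewrite eq_sym.
have nvw : v != w by rewrite eq_sym.
have /orP[] := component_setC1_path nuw (component_root _ v) (component_root _ v)
  nvu nvw pth (esym equ).
- by rewrite Cuw (negbTE wC).
- by rewrite -Cuw (negbTE uC).
Qed.

End ConnectedGraph.

Theorem mainTheorem9 (T : finType) (e : rel T) (v : T) :
  is_tree e ->
  #|T| - #|leaves e v| - 1 + 2 ^ #|leaves e v| <= alpha e v.
Proof.
case=> [[e_sym _] e_conn _].
set L := leaves e v; set U := ~: (v |: L).
set G1 := [set ~: M | M in powerset L].
set G2 := [set component e [set~ u] v | u in U].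
have vL : v \notin L by rewrite !inE eqxx.
have card_G1 : #|G1| = 2 ^ #|L|.
  by rewrite card_imset ?card_powerset //; apply: setC_inj.
have card_G2 : #|G2| = #|U|.
  apply: card_in_imset => u w; rewrite !inE !negb_or => /andP[uv _] /andP[wv _].
  exact: component_setC1_inj.
have G12_disjoint : G1 :&: G2 = set0.
  apply/eqP; rewrite -subset0; apply/subsetP => S; rewrite inE => /andP[].
  case/imsetP => M; rewrite powersetE => /subsetP ML ->.
  case/imsetP => u; rewrite in_setC in_setU1 negb_or => /andP[uv uL] eqMC.
  have uM : u \in ~: M by rewrite inE; apply: contra uL => /ML.
  have uC : u \notin component e [set~ u] v.
    by apply: component_notin; rewrite ?inE ?eqxx.
  by rewrite eqMC (negbTE uC) in uM.
have G12_sub : G1 :|: G2 \subset [set S : {set T} | (v \in S) && is_subtree e S].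
  apply/subsetP => S; rewrite !inE => /orP[/imsetP[M ML ->] | /imsetP[u _ ->]].
    by apply: is_subtree_setC_leaves => //; rewrite -powersetE.
  by rewrite component_root is_subtree_component.
have := subset_leq_card G12_sub.
rewrite cardsU G12_disjoint cards0 subn0 card_G1 card_G2 /alpha.
have := cardsC (v |: L); rewrite cardsU1 vL -/U; lia.
Qed.
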